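(* Let $q\in\mathbb C\setminus\{0\}$ not be a root of unity, $A=\mathbb C_q[SL(2)]$ with the canonical braiding $\Psi$ and the ribbon automorphism $\sigma=\sigma_+$. Then $HH^{\Psi,\sigma}_0(A)=0$; equivalently, the map $b_1:A\otimes A\to A$, $b_1=\mu-\mu(\sigma\otimes\mathrm{id})\Psi$, is surjective.
   Context: Fix $q^{1/2}$. $\mathbb C_q[SL(2)]$: generators $a,b,c,d$, relations $ab=qba$, $ac=qca$, $bd=qdb$, $cd=qdc$, $bc=cb$, $ad-qbc=1$, $da-q^{-1}bc=1$, matrix coproduct $\Delta\begin{pmatrix}a&b\\c&d\end{pmatrix}=\begin{pmatrix}a&b\\c&d\end{pmatrix}\otimes\begin{pmatrix}a&b\\c&d\end{pmatrix}$. Universal r-form $\mathbf r$ determined multiplicatively by $\mathbf r(a,a)=\mathbf r(d,d)=q^{1/2}$, $\mathbf r(a,d)=\mathbf r(d,a)=q^{-1/2}$, $\mathbf r(c,b)=q^{-1/2}(q-q^{-1})$, other generator values $0$. Canonical braiding: $\Psi(f\otimes g)=g_{(1)}\otimes f_{(1)}\mathbf r(f_{(2)},g_{(2)})$. $\sigma_+$ is the ribbon automorphism (invertible right comodule map with $\sigma(1)=1$, $\sigma\mu=\mu(\sigma\otimes\sigma)\Psi^2$) with $\sigma_+(g)=q^{3/2}g$ for $g\in\{a,b,c,d\}$. $HH^{\Psi,\sigma}_0(A)$ is the cokernel of $b_1$ (the degree-zero braided Hochschild homology; $A$ is unital so the cyclic and non-cyclic versions agree in degree 0). *)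

(* Quantum coordinate algebra C_q[SL(2)] encoded through the
   free algebra on the generators a,b,c,d (words with coefficients), modulo the
   two-sided ideal generated by the defining relations. *)
From mathcomp Require Import all_boot all_algebra.
From mathcomp Require Import complex reals.
Set Implicit Arguments.
Unset Strict Implicit.
Unset Printing Implicit Defensive.
Import GRing.Theory.
Local Open Scope ring_scope.

(* generator u_{ij} of the matrix (a b ; c d) is the pair (i,j) *)
Definition gen := ('I_2 * 'I_2)%type.
Definition word := seq gen.

Definition i0 : 'I_2 := ord0.
Definition i1 : 'I_2 := @ord_max 1.
Definition ga : gen := (i0, i0).
Definition gb : gen := (i0, i1).
Definition gc : gen := (i1, i0).
Definition gd : gen := (i1, i1).

(* matrix coproduct on words: Delta(u_ij) = sum_k u_ik (x) u_kj, multiplicative *)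
Fixpoint deltaW (w : word) : seq (word * word) :=
  match w with
  | [::] => [:: ([::], [::])]
  | g :: w' => [seq ((g.1, k) :: p.1, (k, g.2) :: p.2) | k <- enum 'I_2, p <- deltaW w']
  end.

(* iterated coproduct (Delta (x) id) Delta on words *)
Fixpoint delta3W (w : word) : seq (word * word * word) :=
  match w with
  | [::] => [:: ([::], [::], [::])]
  | g :: w' => [seq ((g.1, kl.1) :: t.1.1, kl :: t.1.2, (kl.2, g.2) :: t.2)
               | kl <- enum {: 'I_2 * 'I_2}, t <- delta3W w']
  end.

Section NC.
Variable K : fieldType.

Definition ncpoly := seq (K * word).
Definition ncmonom (c : K) (w : word) : ncpoly := [:: (c, w)].
Definition ncadd (p r : ncpoly) : ncpoly := p ++ r.
Definition ncscale (c : K) (p : ncpoly) : ncpoly := [seq (c * x.1, x.2) | x <- p].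
Definition ncopp (p : ncpoly) : ncpoly := ncscale (-1) p.
Definition ncmul (p r : ncpoly) : ncpoly := [seq (x.1 * y.1, x.2 ++ y.2) | x <- p, y <- r].
Definition nccoef (p : ncpoly) (w : word) : K := \sum_(x <- p | x.2 == w) x.1.

Variable sq : K. (* sq = q^{1/2}, q = sq^2 *)
Definition qq : K := sq ^+ 2.

Definition rels : seq ncpoly :=
  [:: ncadd (ncmonom 1 [:: ga; gb]) (ncmonom (- qq) [:: gb; ga]);
      ncadd (ncmonom 1 [:: ga; gc]) (ncmonom (- qq) [:: gc; ga]);
      ncadd (ncmonom 1 [:: gb; gd]) (ncmonom (- qq) [:: gd; gb]);
      ncadd (ncmonom 1 [:: gc; gd]) (ncmonom (- qq) [:: gd; gc]);
      ncadd (ncmonom 1 [:: gb; gc]) (ncmonom (- 1) [:: gc; gb]);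
      ncadd (ncmonom 1 [:: ga; gd])
            (ncadd (ncmonom (- qq) [:: gb; gc]) (ncmonom (- 1) [::]));
      ncadd (ncmonom 1 [:: gd; ga])
            (ncadd (ncmonom (- qq^-1) [:: gb; gc]) (ncmonom (- 1) [::]))].
Definition rel (i : 'I_7) : ncpoly := nth [::] rels i.

Definition inI (p : ncpoly) : Prop :=
  exists s : seq (K * word * 'I_7 * word),
    forall w, nccoef p w =
      nccoef (flatten [seq ncmul (ncmul (ncmonom t.1.1.1 t.1.1.2) (rel t.1.2))
                                 (ncmonom 1 t.2) | t <- s]) w.

Definition eqA (p r : ncpoly) : Prop := inI (ncadd p (ncopp r)).

Definition epsW (v : word) : K := \prod_(y <- v) (y.1 == y.2)%:R.

Definition r0 (x y : gen) : K :=
  if (x == ga) && (y == ga) then sq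
  else if (x == gd) && (y == gd) then sq
  else if (x == ga) && (y == gd) then sq^-1
  else if (x == gd) && (y == ga) then sq^-1
  else if (x == gc) && (y == gb) then sq^-1 * (qq - qq^-1)
  else 0.

(* multiplicative extension: r(x, y z) = r(x_(1), z) r(x_(2), y) for a generator x *)
Fixpoint r1 (x : gen) (v : word) {struct v} : K :=
  match v with
  | [::] => (x.1 == x.2)%:R
  | y :: z => \sum_(k < 2) r1 (x.1, k) z * r0 (k, x.2) y
  end.

(* r(x u, v) = r(x, v_(1)) r(u, v_(2)),  r(1, v) = eps(v) *)
Fixpoint rW (u v : word) {struct u} : K :=
  match u with
  | [::] => epsW v
  | x :: u' => \sum_(p <- deltaW v) r1 x p.1 * rW u' p.2
  end.

(* ribbon automorphism sigma_+ : sigma(1) = 1, sigma(g) = q^{3/2} g on generators,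
   and sigma(f g) = mu (sigma (x) sigma) Psi^2 (f (x) g)
                  = sigma(f_(1)) sigma(g_(1)) r(g_(2), f_(2)) r(f_(3), g_(3)),
   applied with f = x a generator, g = the rest of the word *)
Fixpoint sigmaN (n : nat) (w : word) {struct n} : ncpoly :=
  match n, w with
  | n'.+1, x :: w' =>
      flatten [seq ncscale (sq ^+ 3 * rW s.1.2 t.1.2 * rW t.2 s.2)
                           (ncmul (ncmonom 1 t.1.1) (sigmaN n' s.1.1))
              | t <- delta3W [:: x], s <- delta3W w']
  | _, _ => ncmonom 1 [::]
  end.
Definition sigmaW (w : word) : ncpoly := sigmaN (size w) w.

(* mu (sigma (x) id) Psi (u (x) v), with Psi(f (x) g) = g_(1) (x) f_(1) r(f_(2), g_(2)) *)
Definition twW (u v : word) : ncpoly :=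
  flatten [seq ncscale (rW pu.2 pv.2) (ncmul (sigmaW pv.1) (ncmonom 1 pu.1))
          | pu <- deltaW u, pv <- deltaW v].

(* b_1 = mu - mu (sigma (x) id) Psi, on a finite sum  sum_i c_i u_i (x) v_i *)
Definition b1 (s : seq (K * word * word)) : ncpoly :=
  flatten [seq ncadd (ncmonom t.1.1 (t.1.2 ++ t.2)) (ncscale (- t.1.1) (twW t.1.2 t.2))
          | t <- s].

End NC.

(* Work modulo the relations and induct on the length of words.  For a word [u] and a
   generator [x], [b1 (u (x) x) = u x - q^(3/2) chi(u) x u], where [chi(u)] is a product of
   factors [q^(+-1/2)] read off the r-form; this needs the braiding of [u] past [x] to be
   diagonal, which holds when [x] is in the first column of the matrix, or when [x] and [u]
   are in the second.  The commutation relations give back [x u = Q u x] up to shorter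
   words, [Q] a product of powers of [q].  Hence [(1 - q^(3/2) chi(u) Q) u x] is reached,
   and for a suitable choice of [x] (a letter [a] if there is one, else [c] or [b], else
   [d]) the scalar [q^(3/2) chi(u) Q] is a positive power of [q^(1/2)], so it is not [1].
   Words containing both [b] and [c] are reduced through [ad - q bc = 1], and the empty
   word comes from [b1 (d (x) a)] and [b1 (b (x) c)] and the two determinant relations. *)

From Pilot Require Import Defs.
From mathcomp Require Import all_boot all_algebra.
From mathcomp Require Import complex reals.
From mathcomp Require Import ring.
Set Implicit Arguments.
Unset Strict Implicit.
Unset Printing Implicit Defensive.
Import GRing.Theory.
Local Open Scope ring_scope.

Section Coefficients.
Variable K : fieldType.
Implicit Types (p r : ncpoly K) (c : K) (u v w : word).

Definition coef_eq p r := forall w, nccoef p w = nccoef r w.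

Lemma nccoefE p w : nccoef p w = \sum_(x <- p) x.1 * (x.2 == w)%:R.
Proof.
rewrite /nccoef big_mkcond /=; apply: eq_bigr => x _.
by case: eqP => _; rewrite ?mulr1 ?mulr0.
Qed.

Lemma nccoef_nil w : nccoef ([::] : ncpoly K) w = 0.
Proof. by rewrite /nccoef big_nil. Qed.

Lemma nccoef_cons c u p w : nccoef ((c, u) :: p) w = c * (u == w)%:R + nccoef p w.
Proof. by rewrite !nccoefE big_cons. Qed.

Lemma nccoef_cat p r w : nccoef (p ++ r) w = nccoef p w + nccoef r w.
Proof. by rewrite /nccoef big_cat. Qed.

Lemma nccoef_monom c u w : nccoef (ncmonom c u) w = c * (u == w)%:R.
Proof. by rewrite nccoef_cons nccoef_nil addr0. Qed.

Lemma nccoef_scale c p w : nccoef (ncscale c p) w = c * nccoef p w.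
Proof. by rewrite !nccoefE big_map big_distrr; apply: eq_bigr => x _ /=; rewrite mulrA. Qed.

Lemma nccoef_opp p w : nccoef (ncopp p) w = - nccoef p w.
Proof. by rewrite /ncopp nccoef_scale mulN1r. Qed.

Lemma nccoef_flatten (L : seq (ncpoly K)) w :
  nccoef (flatten L) w = \sum_(p <- L) nccoef p w.
Proof.
elim: L => [|p L IH]; first by rewrite big_nil nccoef_nil.
by rewrite /= nccoef_cat IH big_cons.
Qed.

Lemma ncmul_monoml c u r : ncmul (ncmonom c u) r = [seq (c * y.1, u ++ y.2) | y <- r].
Proof. by rewrite /ncmul /= cats0. Qed.

Lemma nccoef_mul p r w :
  nccoef (ncmul p r) w = \sum_(x <- p) \sum_(y <- r) x.1 * y.1 * (x.2 ++ y.2 == w)%:R.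
Proof.
rewrite /ncmul nccoef_flatten big_map; apply: eq_bigr => x _.
by rewrite nccoefE big_map.
Qed.

End Coefficients.

Section Image.
Variables (K : fieldType) (sq : K).
Implicit Types (p r : ncpoly K) (c : K).

Definition rel_term (t : K * word * 'I_7 * word) : ncpoly K :=
  ncmul (ncmul (ncmonom t.1.1.1 t.1.1.2) (Defs.rel sq t.1.2)) (ncmonom 1 t.2).

Lemma nccoef_rel_term c u i v w : nccoef (rel_term (c, u, i, v)) w =
  \sum_(r <- Defs.rel sq i) c * r.1 * ((u ++ r.2 ++ v) == w)%:R.
Proof.
rewrite /rel_term /= nccoef_mul ncmul_monoml big_map; apply: eq_bigr => r _.
by rewrite big_seq1 /= mulr1 catA.
Qed.

Lemma inI_coef_eq p r : coef_eq p r -> inI sq p -> inI sq r.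
Proof. by move=> E [s Hs]; exists s => w; rewrite -E. Qed.

Lemma inI_nil : inI sq ([::] : ncpoly K).
Proof. by exists [::]. Qed.

Lemma inI_rel_term t : inI sq (rel_term t).
Proof. by exists [:: t] => w /=; rewrite cats0. Qed.

Lemma inI_add p r : inI sq p -> inI sq r -> inI sq (ncadd p r).
Proof.
move=> [s1 H1] [s2 H2]; exists (s1 ++ s2) => w.
by rewrite /ncadd nccoef_cat H1 H2 map_cat flatten_cat nccoef_cat.
Qed.

Lemma inI_scale c p : inI sq p -> inI sq (ncscale c p).
Proof.
move=> [s Hs]; exists [seq (c * t.1.1.1, t.1.1.2, t.1.2, t.2) | t <- s] => w.
rewrite nccoef_scale Hs !nccoef_flatten !big_map big_distrr.
apply: eq_bigr => -[[[a u] i] v] _; have := nccoef_rel_term; rewrite /rel_term => E.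
by rewrite !E /= mulr_sumr; apply: eq_bigr => y _; ring.
Qed.

Definition im_b1 p := exists s, eqA sq p (b1 sq s).

Lemma nccoef_b1 s w : nccoef (b1 sq s) w =
  \sum_(t <- s) t.1.1 * ((t.1.2 ++ t.2 == w)%:R - nccoef (twW sq t.1.2 t.2) w).
Proof.
rewrite /b1 nccoef_flatten big_map; apply: eq_bigr => t _.
rewrite /ncadd nccoef_cat nccoef_monom nccoef_scale; ring.
Qed.

Lemma im_b1_coef_eq p r : coef_eq p r -> im_b1 p -> im_b1 r.
Proof.
move=> E [s Hs]; exists s; apply: inI_coef_eq Hs => w.
by rewrite /ncadd !nccoef_cat E.
Qed.

Lemma im_b1_add p r : im_b1 p -> im_b1 r -> im_b1 (ncadd p r).
Proof.
move=> [s1 H1] [s2 H2]; exists (s1 ++ s2).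
apply: inI_coef_eq (inI_add H1 H2) => w.
rewrite /ncadd !nccoef_cat !nccoef_opp !nccoef_b1 big_cat /=; ring.
Qed.

Lemma im_b1_scale c p : im_b1 p -> im_b1 (ncscale c p).
Proof.
move=> [s H]; exists [seq (c * t.1.1, t.1.2, t.2) | t <- s].
apply: inI_coef_eq (inI_scale c H) => w.
rewrite /ncadd !nccoef_scale !nccoef_cat !nccoef_opp !nccoef_b1 big_map nccoef_scale.
rewrite mulrDr mulrN; congr (_ - _); rewrite big_distrr; apply: eq_bigr => t _ /=; ring.
Qed.

Lemma im_b1_inI p : inI sq p -> im_b1 p.
Proof.
move=> H; exists [::]; apply: inI_coef_eq H => w.
by rewrite /ncadd nccoef_cat nccoef_opp nccoef_b1 big_nil oppr0 addr0.
Qed.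

Lemma im_b1_b1 s : im_b1 (b1 sq s).
Proof.
exists s; apply: inI_coef_eq inI_nil => w.
by rewrite /ncadd nccoef_cat nccoef_opp nccoef_nil subrr.
Qed.

Lemma im_b1_coef0 p : (forall w, nccoef p w = 0) -> im_b1 p.
Proof. by move=> E; apply/im_b1_inI/(inI_coef_eq _ inI_nil) => w; rewrite E nccoef_nil. Qed.

Lemma im_b1_lin p r t (a b : K) : im_b1 p -> im_b1 r ->
  (forall w, nccoef t w = a * nccoef p w + b * nccoef r w) -> im_b1 t.
Proof.
move=> Hp Hr E; apply: im_b1_coef_eq (im_b1_add (im_b1_scale a Hp) (im_b1_scale b Hr)) => w.
by rewrite E /ncadd nccoef_cat !nccoef_scale.
Qed.

Lemma im_b1_span f : (forall w, im_b1 (ncmonom 1 w)) -> im_b1 f.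
Proof.
move=> H; elim: f => [|[c w] f IH]; first exact/im_b1_inI/inI_nil.
apply: im_b1_coef_eq (im_b1_add (im_b1_scale c (H w)) IH) => v.
by rewrite /ncadd nccoef_cat nccoef_scale !nccoef_monom nccoef_cons mul1r.
Qed.

End Image.

Lemma I2_cases (i : 'I_2) : i = i0 \/ i = i1.
Proof. by case: i => [[|[|m]] Hm]; [left|right|by []]; exact: val_inj. Qed.

Lemma sum_enumI2 (R : nmodType) (F : 'I_2 -> R) :
  \sum_(i <- enum 'I_2) F i = F i0 + F i1.
Proof.
have -> : enum 'I_2 = [:: i0; i1] by apply: (inj_map val_inj); rewrite val_enum_ord.
by rewrite !big_cons big_nil addr0.
Qed.

Lemma sum_enumI2xI2 (R : nmodType) (F : 'I_2 * 'I_2 -> R) :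
  \sum_(i <- enum {: 'I_2 * 'I_2}) F i = F (i0,i0) + F (i0,i1) + F (i1,i0) + F (i1,i1).
Proof.
have E : perm_eq (enum {: 'I_2 * 'I_2}) [:: (i0,i0); (i0,i1); (i1,i0); (i1,i1)].
  apply: uniq_perm; rewrite ?enum_uniq // => -[a b]; rewrite mem_enum.
  by case: (I2_cases a) => ->; case: (I2_cases b) => ->.
by rewrite (perm_big _ E) !big_cons big_nil /= addr0 !addrA.
Qed.

Section Braiding.
Variables (K : fieldType) (sq : K).

Lemma nccoef_sigma_letter x v w :
  nccoef (ncmul (sigmaW sq [:: x]) (ncmonom 1 v)) w = sq ^+ 3 * ((x :: v) == w)%:R.
Proof.
rewrite nccoef_mul /sigmaW /= !big_flatten /= !big_map /= big_flatten big_map /=.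
rewrite (eq_bigr (fun j : 'I_2 * 'I_2 => sq ^+ 3 * (j.1 == j.2)%:R * (j.2 == x.2)%:R
                   * (((x.1, j.1) :: v) == w)%:R)); last first.
  move=> [i j] _; rewrite !big_cons !big_nil /= !big_cons !big_nil /= /epsW.
  by rewrite !big_cons !big_nil /=; ring.
rewrite sum_enumI2xI2 /=; case: x => x1 x2; case: (I2_cases x2) => -> /=; rewrite ?eqxx /=; ring.
Qed.

Definition rcontr (u : word) (k j : 'I_2) (z w : word) : K :=
  \sum_(pu <- deltaW u) rW sq pu.2 [:: (k, j)] * ((z ++ pu.1) == w)%:R.

Lemma nccoef_twW_letter u g w : nccoef (twW sq u [:: g]) w =
  sq ^+ 3 * \sum_(k <- enum 'I_2) rcontr u k g.2 [:: (g.1, k)] w.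
Proof.
rewrite /twW nccoef_flatten big_allpairs_dep /rcontr big_distrr exchange_big /=.
rewrite big_flatten big_map; apply: eq_bigr => k _.
rewrite big_cons big_nil /= addr0 big_distrr; apply: eq_bigr => pu _.
by rewrite nccoef_scale nccoef_sigma_letter /=; ring.
Qed.

Lemma rW_cons_letter y u k j : rW sq (y :: u) [:: (k, j)] =
  \sum_(k2 <- enum 'I_2) r0 sq y (k, k2) * rW sq u [:: (k2, j)].
Proof.
rewrite /= big_flatten big_map; apply: eq_bigr => k2 _.
rewrite big_seq1 /= (bigD1 y.1) //= eqxx big1 ?addr0; first by case: y => ? ? /=; ring.
by move=> i /negbTE; rewrite eq_sym => ->; rewrite mul0r.
Qed.

Lemma rcontr_nil k j z w : rcontr [::] k j z w = (k == j)%:R * (z == w)%:R.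
Proof. by rewrite /rcontr big_seq1 /= /epsW big_cons big_nil mulr1 cats0. Qed.

Lemma rcontr_cons x u k j z w : rcontr (x :: u) k j z w =
  \sum_(k1 <- enum 'I_2) \sum_(k2 <- enum 'I_2)
     r0 sq (k1, x.2) (k, k2) * rcontr u k2 j (rcons z (x.1, k1)) w.
Proof.
rewrite /rcontr /= big_allpairs_dep; apply: eq_bigr => k1 _.
rewrite (eq_bigr (fun p => \sum_(k2 <- enum 'I_2) r0 sq (k1, x.2) (k, k2) *
           (rW sq p.2 [:: (k2, j)] * (rcons z (x.1, k1) ++ p.1 == w)%:R))); last first.
  move=> p _; rewrite -[((_, _) :: _, _).2]/((k1, x.2) :: p.2).
  rewrite -[((_, _) :: _, _).1]/((x.1, k1) :: p.1) rW_cons_letter big_distrl /= cat_rcons.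
  by apply: eq_bigr => k2 _; rewrite mulrA.
by rewrite exchange_big /=; apply: eq_bigr => k2 _; rewrite big_distrr.
Qed.

Definition weight (j : 'I_2) (y : gen) : K := if y.2 == j then sq else sq^-1.
Definition chi (j : 'I_2) (u : word) : K := \prod_(y <- u) weight j y.

Lemma rcontr1 u j z w : rcontr u i1 j z w = (i1 == j)%:R * chi i1 u * ((z ++ u) == w)%:R.
Proof.
elim: u z => [|x u IH] z; first by rewrite rcontr_nil /chi big_nil cats0; ring.
rewrite rcontr_cons !sum_enumI2 !IH /chi big_cons /weight.
by case: x => x1 x2; case: (I2_cases x2) => -> /=; rewrite !cat_rcons /r0 /=; ring.
Qed.

Lemma rcontr00 u z w : rcontr u i0 i0 z w = chi i0 u * ((z ++ u) == w)%:R.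
Proof.
elim: u z => [|x u IH] z; first by rewrite rcontr_nil /chi big_nil cats0 eqxx mul1r.
rewrite rcontr_cons !sum_enumI2 !IH !rcontr1 /chi big_cons /weight.
by case: x => x1 x2; case: (I2_cases x2) => -> /=; rewrite !cat_rcons /r0 /=; ring.
Qed.

Lemma rcontr01 u z w : all (fun y : gen => y.2 == i1) u -> rcontr u i0 i1 z w = 0.
Proof.
elim: u z => [|x u IH] z; first by rewrite rcontr_nil /= mul0r.
case/andP => Hx Hu; rewrite rcontr_cons !sum_enumI2 !IH // !rcontr1.
by case: x Hx => x1 x2 /= /eqP ->; rewrite /r0 /=; ring.
Qed.

(* For [g] in the second column ([b] or [d]) the braiding of [u] past [g] is diagonal
   only when [u] itself lies in the second column. *)
Lemma nccoef_b1_letter u g w : (g.2 = i1 -> all (fun y : gen => y.2 == i1) u) ->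
  nccoef (b1 sq [:: (1, u, [:: g])]) w =
  ((u ++ [:: g]) == w)%:R - sq ^+ 3 * chi g.2 u * ((g :: u) == w)%:R.
Proof.
move=> Hu; rewrite nccoef_b1 big_seq1 /= nccoef_twW_letter sum_enumI2 mul1r rcontr1.
case: g Hu => g1 g2 /=; case: (I2_cases g2) => -> Hu; first by rewrite rcontr00 /=; ring.
by rewrite rcontr01 ?Hu // add0r mul1r mulrA.
Qed.

End Braiding.

Section Commutation.
Variables (K : fieldType) (sq : K).
Hypothesis sq0 : sq != 0.
Local Notation q := (qq sq).

(* The defining relations say [x y = qcomm x y * y x + ccomm x y] for all generators;
   [comm_terms x y] lists the relation terms whose sum is the difference. *)
Definition qcomm (x y : gen) : K :=
  match (val x.1, val x.2, val y.1, val y.2) with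
  | (0,0,0,1) => q | (0,1,0,0) => q^-1
  | (0,0,1,0) => q | (1,0,0,0) => q^-1
  | (0,1,1,1) => q | (1,1,0,1) => q^-1
  | (1,0,1,1) => q | (1,1,1,0) => q^-1
  | (0,0,1,1) => q^+2 | (1,1,0,0) => q^-1^+2
  | _ => 1 end.

Definition ccomm (x y : gen) : K :=
  match (val x.1, val x.2, val y.1, val y.2) with
  | (0,0,1,1) => 1 - q^+2 | (1,1,0,0) => 1 - q^-1^+2
  | _ => 0 end.

Definition comm_terms (x y : gen) : seq (K * 'I_7) :=
  match (val x.1, val x.2, val y.1, val y.2) with
  | (0,0,0,1) => [:: (1, @Ordinal 7 0 isT)] | (0,1,0,0) => [:: (- q^-1, @Ordinal 7 0 isT)]
  | (0,0,1,0) => [:: (1, @Ordinal 7 1 isT)] | (1,0,0,0) => [:: (- q^-1, @Ordinal 7 1 isT)]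
  | (0,1,1,1) => [:: (1, @Ordinal 7 2 isT)] | (1,1,0,1) => [:: (- q^-1, @Ordinal 7 2 isT)]
  | (1,0,1,1) => [:: (1, @Ordinal 7 3 isT)] | (1,1,1,0) => [:: (- q^-1, @Ordinal 7 3 isT)]
  | (0,1,1,0) => [:: (1, @Ordinal 7 4 isT)] | (1,0,0,1) => [:: (-1, @Ordinal 7 4 isT)]
  | (0,0,1,1) => [:: (1, @Ordinal 7 5 isT); (- q^+2, @Ordinal 7 6 isT)]
  | (1,1,0,0) => [:: (- q^-1^+2, @Ordinal 7 5 isT); (1, @Ordinal 7 6 isT)]
  | _ => [::] end.

Lemma inI_comm u v x y :
  inI sq (ncadd (ncmonom 1 (u ++ x :: y :: v))
    (ncadd (ncmonom (- qcomm x y) (u ++ y :: x :: v)) (ncmonom (- ccomm x y) (u ++ v)))).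
Proof.
have q0 : q != 0 by rewrite expf_neq0.
exists [seq (t.1, u, t.2, v) | t <- comm_terms x y] => w.
rewrite /ncadd !nccoef_cat !nccoef_monom nccoef_flatten big_map.
have := nccoef_rel_term sq; rewrite /rel_term => E.
under eq_bigr do rewrite E.
case: x => x1 x2; case: y => y1 y2.
case: (I2_cases x1) => ->; case: (I2_cases x2) => ->;
case: (I2_cases y1) => ->; case: (I2_cases y2) => ->;
rewrite /qcomm /ccomm /comm_terms /= ?big_nil ?big_cons ?big_nil /= /ga /gb /gc /gd;
by field.
Qed.

End Commutation.

Lemma gen_cases (y : gen) : [\/ y = ga, y = gb, y = gc | y = gd].
Proof.
case: y => y1 y2; case: (I2_cases y1) => ->; case: (I2_cases y2) => ->.
- exact: Or41. - exact: Or42. - exact: Or43. - exact: Or44.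
Qed.

(* The generators [y] that a generator [x] can be braided past and commuted back across
   at a total cost [weight x.2 y * qcomm x y] which is a power of [q^(1/2)]. *)
Definition admissible (x y : gen) : bool :=
  [|| x == ga, (x == gb) && (y.2 == i1), (x == gc) && (y.1 == i1) | y == gd].

Lemma admissible_col1 x y : x.2 = i1 -> admissible x y -> y.2 == i1.
Proof. by case: (gen_cases x) => -> // _; case: (gen_cases y) => ->. Qed.

Section Reduction.
Variables (K : fieldType) (sq : K).
Hypothesis sq0 : sq != 0.
Hypothesis q_not_root : forall m, (0 < m)%N -> (sq ^+ 2) ^+ m != 1.

Local Notation W w := (ncmonom (1 : K) w).
Local Notation q := (qq sq).

Lemma sq_pow_neq1 N : (0 < N)%N -> sq ^+ N != 1.
Proof.
move=> HN; apply: contra (q_not_root HN) => /eqP H.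
by rewrite -exprM mulnC exprM H expr1n.
Qed.

Definition qcomm_prod (x : gen) (p : word) : K := \prod_(y <- p) qcomm sq x y.

Lemma weight_qcomm_pow x y : admissible x y ->
  exists N, weight sq x.2 y * qcomm sq x y = sq ^+ N.
Proof.
rewrite /admissible /weight /qcomm /qq.
by case: (gen_cases x) => ->; case: (gen_cases y) => -> //= _;
  first [by exists 1%N; field | by exists 3%N; field].
Qed.

Lemma twist_neq1 x u (Hu : all (admissible x) u) :
  sq ^+ 3 * chi sq x.2 u * qcomm_prod x u != 1.
Proof.
suff [N HN] : exists N, chi sq x.2 u * qcomm_prod x u = sq ^+ N.
  by rewrite -mulrA HN -exprD sq_pow_neq1.
elim: u Hu => [|y u IHu] /=; first by exists 0%N; rewrite /chi /qcomm_prod !big_nil mulr1.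
case/andP => /weight_qcomm_pow [N1 H1] /IHu [N2 H2].
by exists (N1 + N2)%N; rewrite exprD -H1 -H2 /chi /qcomm_prod !big_cons; ring.
Qed.

(* [b1 (d (x) a) - beta b1 (b (x) c)] combined with the relations leaves [(1 - q) 1]. *)
Lemma im_b1_nil : im_b1 sq (W [::]).
Proof.
have q0 : q != 0 by rewrite expf_neq0.
have q1 : 1 - q != 0 by rewrite subr_eq0 eq_sym /qq -(expr1 (sq ^+ 2)) q_not_root.
set beta := (q^-1 - q^+2) / (1 - q).
have E : im_b1 sq (ncadd (ncadd (W [:: gd; ga]) (ncmonom (- q) [:: ga; gd]))
              (ncadd (ncmonom (- beta) [:: gb; gc]) (ncmonom (beta * q) [:: gc; gb]))).
  apply: (im_b1_lin (a := 1) (b := - beta) (im_b1_b1 sq [:: (1, [:: gd], [:: ga])])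
                    (im_b1_b1 sq [:: (1, [:: gb], [:: gc])])) => w.
  rewrite !nccoef_b1_letter // /chi !big_seq1 /weight /= !nccoef_cons !nccoef_nil /beta /qq.
  by move: q1; rewrite /qq => q1; field; rewrite ?q1 ?sq0.
have Rel k (Hk : (k < 7)%N) := im_b1_inI (inI_rel_term sq (1, [::], Ordinal Hk, [::])).
have G := im_b1_add (im_b1_add (im_b1_add E (im_b1_scale (-1) (Rel 6%N isT)))
             (im_b1_scale q (Rel 5%N isT))) (im_b1_scale (beta * q) (Rel 4%N isT)).
apply: im_b1_coef_eq (im_b1_scale (1 - q)^-1 G) => w.
rewrite /ncadd !nccoef_scale !nccoef_cat !nccoef_scale !nccoef_cat ?nccoef_rel_term /= ?big_cons ?big_nil /=.
rewrite ?nccoef_cons ?nccoef_monom ?nccoef_nil /beta /ga /gb /gc /gd.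
by move: q1; rewrite /qq => q1; field; rewrite ?q1 ?sq0.
Qed.

Variable n : nat.
Hypothesis IH : forall v : word, (size v < n)%N -> im_b1 sq (W v).

Lemma im_b1_comm u v x y : size (u ++ x :: y :: v) = n ->
  im_b1 sq (ncadd (W (u ++ x :: y :: v)) (ncmonom (- qcomm sq x y) (u ++ y :: x :: v))).
Proof.
move=> Hs; have Hl : (size (u ++ v) < n)%N by rewrite -Hs !size_cat /= !addnS ltnS leqnSn.
apply: (im_b1_lin (a := 1) (b := ccomm sq x y) (im_b1_inI (inI_comm sq0 u v x y)) (IH Hl)).
by move=> w; rewrite /ncadd !nccoef_cat !nccoef_monom; ring.
Qed.

Lemma im_b1_move p u v x : size (u ++ x :: p ++ v) = n ->
  im_b1 sq (ncadd (W (u ++ x :: p ++ v)) (ncmonom (- qcomm_prod x p) (u ++ p ++ x :: v))).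
Proof.
elim: p u => [|y p IHp] u Hs.
  by apply: im_b1_coef0 => w; rewrite /ncadd nccoef_cat !nccoef_monom /qcomm_prod big_nil; ring.
have H2 : im_b1 sq (ncadd (W (rcons u y ++ x :: p ++ v))
              (ncmonom (- qcomm_prod x p) (rcons u y ++ p ++ x :: v))).
  by apply: IHp; rewrite cat_rcons -Hs !size_cat /= !addnS.
rewrite !cat_rcons in H2.
apply: (im_b1_lin (a := 1) (b := qcomm sq x y) (im_b1_comm Hs) H2) => w.
by rewrite /ncadd !nccoef_cat !nccoef_monom /qcomm_prod big_cons /=; ring.
Qed.

Lemma im_b1_last_letter x u : size (u ++ [:: x]) = n -> all (admissible x) u ->
  im_b1 sq (W (u ++ [:: x])).
Proof.
move=> Hs Hu; set al := sq ^+ 3 * chi sq x.2 u.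
have B : im_b1 sq (ncadd (W (u ++ [:: x])) (ncmonom (- al) (x :: u))).
  apply: im_b1_coef_eq (im_b1_b1 sq [:: (1, u, [:: x])]) => w.
  rewrite nccoef_b1_letter ?/ncadd ?nccoef_cat ?nccoef_monom; first by rewrite /al; ring.
  by move=> Hx; apply/allP => y /(allP Hu); apply: admissible_col1.
have M : im_b1 sq (ncadd (W (x :: u)) (ncmonom (- qcomm_prod x u) (u ++ [:: x]))).
  by have := @im_b1_move u [::] [::] x; rewrite cats0 !cat0s; apply; rewrite -Hs size_cat addn1.
have Hne : 1 - al * qcomm_prod x u != 0 by rewrite subr_eq0 eq_sym /al twist_neq1.
apply: (im_b1_lin (a := (1 - al * qcomm_prod x u)^-1)
                  (b := (1 - al * qcomm_prod x u)^-1 * al) B M) => w.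
by rewrite /ncadd !nccoef_cat !nccoef_monom; field.
Qed.

Lemma im_b1_move_last p x r : size (p ++ x :: r) = n ->
  im_b1 sq (W ((p ++ r) ++ [:: x])) -> im_b1 sq (W (p ++ x :: r)).
Proof.
move=> Hs Hu; have M := @im_b1_move r p [::] x; rewrite cats0 catA in M.
apply: (im_b1_lin (a := 1) (b := qcomm_prod x r) (M Hs) Hu) => w.
by rewrite /ncadd nccoef_cat !nccoef_monom; ring.
Qed.

Lemma im_b1_admissible x w : size w = n -> x \in w -> all (admissible x) w -> im_b1 sq (W w).
Proof.
move=> + Hx; case/splitPr: Hx => p r Hs; rewrite all_cat /= => /and3P [Hp _ Hr].
apply: (im_b1_move_last Hs); apply: im_b1_last_letter; last by rewrite all_cat Hp Hr.
by rewrite -Hs !size_cat /= addn1 addnS.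
Qed.

(* Move [b] next to [c] and use [ad - q bc = 1]: the word obtained contains [a]. *)
Lemma im_b1_bc w : size w = n -> gb \in w -> gc \in w -> im_b1 sq (W w).
Proof.
move=> + Hb Hc; case/splitPr: Hc Hb => p r Hb Hs.
apply: (im_b1_move_last Hs).
have Hbpr : gb \in p ++ r by move: Hb; rewrite !mem_cat in_cons.
have : (size (p ++ r)).+1 = n by rewrite -Hs !size_cat /= addnS.
case/splitPr: Hbpr => p' r'; rewrite size_cat /= addnS => Hsize.
have Hn : size (p' ++ gb :: r' ++ [:: gc]) = n.
  by rewrite -Hsize size_cat /= size_cat addn1 !addnS.
have HA : im_b1 sq (W ((p' ++ r') ++ [:: ga; gd])).
  apply: (@im_b1_admissible ga); last by apply/allP => y _; rewrite /admissible eqxx.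
    by rewrite -Hsize !size_cat addn2.
  by rewrite mem_cat in_cons eqxx orbT.
have HZ : im_b1 sq (W (p' ++ r')) by apply: IH; rewrite -Hsize size_cat ltnS leqnSn.
have HR := im_b1_inI (inI_rel_term sq (1, p' ++ r', @Ordinal 7 5 isT, [::])).
have q0 : q != 0 by rewrite expf_neq0.
set m := qcomm_prod gb r'.
have G := im_b1_add (im_b1_add (im_b1_add (im_b1_move Hn) (im_b1_scale (m / q) HA))
            (im_b1_scale (- m / q) HZ)) (im_b1_scale (- m / q) HR).
apply: im_b1_coef_eq G => v.
rewrite /ncadd !nccoef_cat !nccoef_scale !nccoef_cat !nccoef_monom /= ?nccoef_nil.
by rewrite -!catA /= ?cats0 /m; field.
Qed.

Lemma im_b1_word w : size w = n -> im_b1 sq (W w).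
Proof.
move=> Hs; have [Ha|Na] := boolP (ga \in w).
  by apply: (im_b1_admissible Hs Ha); apply/allP => y _; rewrite /admissible eqxx.
have [Hb|Nb] := boolP (gb \in w); have [Hc|Nc] := boolP (gc \in w).
- exact: im_b1_bc.
- apply: (im_b1_admissible Hs Hb); apply/allP => y Hy.
  by case: (gen_cases y) Hy => -> // Hy; [rewrite Hy in Na | rewrite Hy in Nc].
- apply: (im_b1_admissible Hs Hc); apply/allP => y Hy.
  by case: (gen_cases y) Hy => -> // Hy; [rewrite Hy in Na | rewrite Hy in Nb].
- case: w Hs Na Nb Nc => [|y w] Hs Na Nb Nc; first exact: im_b1_nil.
  apply: (@im_b1_admissible gd) Hs _ _; last first.
    apply/allP => z Hz; rewrite /admissible orbC.
    by case: (gen_cases z) Hz => -> // Hz; [rewrite Hz in Na | rewrite Hz in Nb | rewrite Hz in Nc].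
  by case: (gen_cases y) Na Nb Nc => ->; rewrite ?mem_head.
Qed.

End Reduction.

Theorem mainTheorem11 (R : realType) (q sq : R[i]) :
  sq ^+ 2 = q -> q != 0 ->
  (forall n : nat, (0 < n)%N -> q ^+ n != 1) ->
  forall f : ncpoly R[i], exists s : seq (R[i] * word * word),
    eqA sq f (b1 sq s).
Proof.
move=> <- q0 q_not_root f; apply: im_b1_span => w.
have sq0 : sq != 0 by apply: contra q0 => /eqP ->; rewrite expr0n.
elim/ltn_ind: {w}(size w) {-2}w (erefl (size w)) => n IHn w Hs.
by apply: (im_b1_word sq0 q_not_root _ Hs) => v Hv; apply: IHn Hv v erefl.
Qed.
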